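(* Let $q$ be a prime power, $n,r$ integers with $r\le\lfloor n/2\rfloor$, $0<\rho<r$, and let $\mathcal{C}\subseteq E_r(q,n)$ have covering radius $\rho$. Let $\mathcal{A} = \{U\in E_r(q,n): d_{\mathrm{I}}(U,\mathcal{C}) = \rho\}$ and $\mathcal{Z} = \{Z\in E_r(q,n): E_{\mathcal{C}}(\{Z\})\ge 1\}$. Then for every $Z\in\mathcal{Z}$, $|\mathcal{A}\cap B_1(Z)|\le V_{\mathrm{C}}(1) - c_\rho$.
   Context: $E_r(q,n)$ is the set of $r$-dimensional subspaces of $\mathrm{GF}(q)^n$ with injection distance $d_{\mathrm{I}}(U,V)=\dim(U+V)-\min\{\dim U,\dim V\}$; $d_{\mathrm{I}}(U,\mathcal{C})=\min_{C\in\mathcal{C}}d_{\mathrm{I}}(U,C)$; $B_t(U)=\{V\in E_r(q,n): d_{\mathrm{I}}(U,V)\le t\}$. The covering radius of $\mathcal{C}$ is $\max_U d_{\mathrm{I}}(U,\mathcal{C})$. For $V\subseteq E_r(q,n)$, $E_{\mathcal{C}}(V) = \sum_{C\in\mathcal{C}}|B_\rho(C)\cap V| - |V|$. ${m\brack k}=\prod_{i=0}^{k-1}\frac{q^m-q^i}{q^k-q^i}$; $N_{\mathrm{C}}(d) = q^{d^2}{r\brack d}{n-r \brack d}$, $V_{\mathrm{C}}(t)=\sum_{d=0}^tN_{\mathrm{C}}(d)$; $c_j = {j\brack 1}^2$. *)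

(* Subspaces of GF(q)^n are represented canonically by the
   square matrices A : 'M[F]_n with <<A>>%MS = A (row space = the subspace). *)
From HB Require Import structures.
From mathcomp Require Import all_boot all_order all_algebra all_field.
Set Implicit Arguments. Unset Strict Implicit. Unset Printing Implicit Defensive.
Import Order.TTheory GRing.Theory Num.Theory.

Section Defs.
Variables (F : finFieldType) (n : nat).

Definition Er (r : nat) : {set 'M[F]_n} :=
  [set U : 'M[F]_n | (<<U>>%MS == U) && (\rank U == r)].

Definition dI (U V : 'M[F]_n) : nat :=
  (\rank (U + V)%MS - minn (\rank U) (\rank V))%N.

(* distance to a code (min over the code; default n if the code is empty) *)
Definition dIC (U : 'M[F]_n) (C : {set 'M[F]_n}) : nat :=
  \big[minn/n]_(X in C) dI U X.

Definition covering_radius (r : nat) (C : {set 'M[F]_n}) : nat :=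
  \max_(U in Er r) dIC U C.

Definition ball (r t : nat) (U : 'M[F]_n) : {set 'M[F]_n} :=
  [set V in Er r | dI U V <= t].

Definition excess (r rho : nat) (C : {set 'M[F]_n}) (V : {set 'M[F]_n}) : int :=
  (\sum_(X in C) #|ball r rho X :&: V|)%:Z - #|V|%:Z.

Definition Aset (r rho : nat) (C : {set 'M[F]_n}) : {set 'M[F]_n} :=
  [set U in Er r | dIC U C == rho].

Definition Zset (r rho : nat) (C : {set 'M[F]_n}) : {set 'M[F]_n} :=
  [set Z in Er r | (1 <= excess r rho C [set Z])%R].

End Defs.

Local Open Scope ring_scope.

Definition gaussb (q m k : nat) : rat :=
  \prod_(i < k) ((q%:R ^+ m - q%:R ^+ i) / (q%:R ^+ k - q%:R ^+ i)).

Definition NC (q n r d : nat) : rat :=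
  (q%:R ^+ (d * d)) * gaussb q r d * gaussb q (n - r) d.

Definition VC (q n r t : nat) : rat := \sum_(d < t.+1) NC q n r d.

Definition cj (q j : nat) : rat := gaussb q j 1 ^+ 2.

From HB Require Import structures.
From mathcomp Require Import all_boot all_order all_algebra all_field.
From mathcomp Require Import lra zify.
Set Implicit Arguments. Unset Strict Implicit. Unset Printing Implicit Defensive.
Import Order.TTheory GRing.Theory Num.Theory.
Local Open Scope ring_scope.

(* Write [m] for (q^m - 1)/(q - 1), the number of points of PG(m - 1, q).
   Besides [Z], the ball B_1(Z) consists of the spaces H + <y> with H a
   hyperplane of Z and y outside Z; normalising H (as the kernel of a monic
   functional on the coordinates of Z) and y (by its monic component in a
   complement of Z, plus one free coordinate along the pivot of that
   functional) parametrises them injectively, so |B_1(Z)| <= 1 + q[r][n-r],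
   which is V_C(1).  It remains to find c_rho = [rho]^2 members of B_1(Z)
   within distance rho - 1 of some codeword C1, hence outside A.  Take C1 with
   d(Z, C1) <= rho and let W = Z :&: C1.  If d(Z, C1) = rho, the spaces
   W + H + <y> with H a hyperplane of a complement of W in Z and y a nonzero
   vector of a complement of Z in Z + C1 meet C1 in dimension r - rho + 1, and
   there are [rho]^2 of them.  If d(Z, C1) < rho, then Z and all its
   neighbours containing a fixed (r - rho + 1)-subspace of W qualify; there
   are 1 + q[rho - 1][n - r] >= [rho]^2 of them since n - r > rho. *)

Section MonicRows.
Variable F : fieldType.

(* Normal form of a nonzero vector up to scaling, with pivot [p]. *)
Definition monic_row m (p : 'I_m) (v : 'rV[F]_m) : bool :=
  (v 0 p == 1) && [forall j : 'I_m, (j < p)%N ==> (v 0 j == 0)].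

Lemma monic_row_pivot m (p : 'I_m) v : monic_row p v -> v 0 p = 1.
Proof. by case/andP=> /eqP. Qed.

Lemma monic_row_neq0 m (p : 'I_m) v : monic_row p v -> v != 0.
Proof.
move/monic_row_pivot=> vp; apply/eqP=> v0; move: vp; rewrite v0 mxE => /eqP.
by rewrite eq_sym oner_eq0.
Qed.

Lemma monic_row_lt_pivot m (p j : 'I_m) v : monic_row p v -> (j < p)%N -> v 0 j = 0.
Proof. by case/andP=> _ /forallP/(_ j)/implyP jp /jp/eqP. Qed.

Lemma monic_row_collinear m (p p' : 'I_m) h h' c :
  monic_row p h -> monic_row p' h' -> h = c *: h' -> p = p' /\ h = h'.
Proof.
move=> Mh Mh' E; have hp := monic_row_pivot Mh; have hp' := monic_row_pivot Mh'.
have pp' : p = p'.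
  case: (ltngtP p p') => [lt|lt|/val_inj //]; move/eqP: hp; apply: contraTeq => _.
    by rewrite E mxE (monic_row_lt_pivot Mh' lt) mulr0 eq_sym oner_eq0.
  have c0 : c = 0 by move: (monic_row_lt_pivot Mh lt); rewrite E mxE hp' mulr1.
  by rewrite E mxE c0 mul0r eq_sym oner_eq0.
subst p'; split=> //; have c1 : c = 1 by move: hp; rewrite E mxE hp' mulr1.
by rewrite E c1 scale1r.
Qed.

Lemma monic_row_exists m (v : 'rV[F]_m) : v != 0 ->
  exists p c h, [/\ monic_row p h, c != 0 & v = c *: h].
Proof.
move=> v0; have [j0 vj0] : exists j, v 0 j != 0.
  apply/existsP; apply: contraR v0; rewrite negb_exists => /forallP v0.
  apply/eqP/matrixP=> i j; rewrite !mxE (ord1 i); exact/eqP/negbNE/v0.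
case: (@arg_minnP _ j0 (fun j => v 0 j != 0) val vj0) => p vp pmin.
exists p, (v 0 p), ((v 0 p)^-1 *: v); split=> //; last first.
  by rewrite scalerA divff // scale1r.
rewrite /monic_row mxE mulVf //= eqxx /=; apply/forall_inP=> j jp.
rewrite mxE; case: (v 0 j =P 0) => [->|/eqP vj]; first by rewrite mulr0.
by move: (pmin j vj); rewrite leqNgt jp.
Qed.

Definition dot m (a g : 'rV[F]_m) : F := (a *m g^T) 0 0.

Lemma mul_tr_eq0 m (a g : 'rV[F]_m) : (a *m g^T == 0) = (dot a g == 0).
Proof.
rewrite /dot; apply/eqP/eqP => [->|ag0]; first by rewrite mxE.
by apply/matrixP=> i j; rewrite (ord1 i) (ord1 j) [RHS]mxE ag0.
Qed.

Lemma dotDl m (a b g : 'rV[F]_m) : dot (a + b) g = dot a g + dot b g.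
Proof. by rewrite /dot mulmxDl mxE. Qed.

Lemma dotZl m c (a g : 'rV[F]_m) : dot (c *: a) g = c * dot a g.
Proof. by rewrite /dot -scalemxAl mxE. Qed.

Lemma dotNl m (a g : 'rV[F]_m) : dot (- a) g = - dot a g.
Proof. by rewrite -scaleN1r dotZl mulN1r. Qed.

Lemma dot_delta m (j : 'I_m) (g : 'rV[F]_m) : dot (delta_mx 0 j) g = g 0 j.
Proof. by rewrite /dot -rowE !mxE. Qed.

Lemma monic_row_ker_inj m (p p' : 'I_m) (g g' : 'rV[F]_m) :
  monic_row p g -> monic_row p' g' ->
  (forall a : 'rV_m, (a *m g^T == 0) = (a *m g'^T == 0)) -> p = p' /\ g = g'.
Proof.
move=> Mg Mg' ker_eq; suff E : g' = g' 0 p *: g.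
  by case: (monic_row_collinear Mg' Mg E) => -> ->.
apply/matrixP=> i j; rewrite (ord1 i) mxE.
have := ker_eq (delta_mx 0 j - g 0 j *: delta_mx 0 p).
rewrite !mul_tr_eq0 !dotDl !dotNl !dotZl !dot_delta (monic_row_pivot Mg).
by rewrite mulr1 subrr eqxx => /esym; rewrite subr_eq0 mulrC => /eqP.
Qed.

End MonicRows.

Definition monic_rows (F : finFieldType) m : {set 'I_m * 'rV[F]_m} :=
  [set x | monic_row x.1 x.2].

Lemma card_monic_rows (F : finFieldType) m :
  (#|monic_rows F m| * #|F|.-1 = #|F| ^ m - 1)%N.
Proof.
set D := setX [set c : F | c != 0] (monic_rows F m).
have cardD : #|D| = (#|F|.-1 * #|monic_rows F m|)%N.
  rewrite cardsX -(cardsC1 (0 : F)); congr (_ * _)%N.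
  by apply: eq_card => c; rewrite !inE.
have -> : (#|F| ^ m - 1 = #|[set~ (0 : 'rV[F]_m)%R]|)%N.
  by rewrite cardsC1 card_mx mul1n subn1.
rewrite mulnC -cardD.
have inj : {in D &, injective (fun x : F * ('I_m * 'rV[F]_m) => x.1 *: x.2.2)}.
  move=> [c [p h]] [c' [p' h']]; rewrite !inE /= => /andP[c0 Mh] /andP[c'0 Mh'] E.
  have E' : h = (c^-1 * c') *: h' by rewrite -scalerA -E scalerA mulVf // scale1r.
  case: (monic_row_collinear Mh Mh' E') => pp' hh'; subst p' h'; congr (_, _).
  have : (c - c') *: h = 0 by rewrite scalerBl E subrr.
  move/eqP; rewrite scaler_eq0 (negbTE (monic_row_neq0 Mh)) orbF subr_eq0.
  by move/eqP.
rewrite -(card_in_imset inj); apply: eq_card => v; rewrite !inE.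
apply/imsetP/idP => [[[c [p h]]]|v0].
  by rewrite !inE /= => /andP[c0 Mh] ->; rewrite scaler_eq0 negb_or c0 (monic_row_neq0 Mh).
case: (monic_row_exists v0) => p [c [h [Mh c0 ->]]].
by exists (c, (p, h)); rewrite // !inE /= c0.
Qed.

Section RowSpaces.
Variable F : fieldType.

Lemma mxrank_adds_row m n (A : 'M[F]_(m, n)) (y : 'rV_n) :
  ~~ (y <= A)%MS -> \rank (A + y)%MS = (\rank A).+1.
Proof.
move=> yA; apply/eqP; rewrite eqn_leq; apply/andP; split.
  apply: leq_trans (mxrank_adds_leqif A y).1 _.
  by rewrite -[(\rank A).+1]addn1 leq_add2l rank_leq_row.
apply: rank_ltmx; rewrite ltmxE addsmxSl /=; apply: contra yA.
exact: submx_trans (addsmxSr _ _).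
Qed.

Lemma capmx_eq0S m1 m2 m3 m4 n (A : 'M[F]_(m1, n)) (B : 'M[F]_(m2, n))
    (M : 'M[F]_(m3, n)) (N : 'M[F]_(m4, n)) :
  (A :&: B)%MS = 0 -> (M <= A)%MS -> (N <= B)%MS -> (M :&: N)%MS = 0.
Proof.
move=> AB0 MA NB; apply/eqP; rewrite -submx0.
by apply: submx_trans (capmxS MA NB) _; rewrite AB0.
Qed.

Lemma capmx_eq0_sub m1 m2 n (A : 'M[F]_(m1, n)) (B : 'M[F]_(m2, n)) (v : 'rV_n) :
  (A :&: B)%MS = 0 -> (v <= A)%MS -> (v <= B)%MS -> v = 0.
Proof.
move=> AB0 vA vB; apply/eqP; by rewrite -submx0 -AB0 sub_capmx vA.
Qed.

Lemma hyperplane_monic_kermx m k (A : 'M[F]_(k, m)) : (0 < m)%N -> \rank A = m.-1 ->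
  exists p g, monic_row p g /\ (kermx g^T <= A)%MS.
Proof.
move=> m_gt0 rkA; have rkK : \rank (kermx A^T) = 1%N.
  by rewrite mxrank_ker mxrank_tr rkA; lia.
have [i gi] : exists i, row i (kermx A^T) != 0.
  have : ~~ (kermx A^T <= (0 : 'M_m))%MS by rewrite submx0 -mxrank_eq0 rkK.
  by case/row_subPn => i; rewrite submx0; exists i.
case: (monic_row_exists gi) => p [c [g [Mg c0 gE]]]; exists p, g; split=> //.
have Ag0 : A *m g^T = 0.
  apply: trmx_inj; rewrite trmx_mul trmxK trmx0.
  have -> : g = c^-1 *: row i (kermx A^T) by rewrite gE scalerA mulVf // scale1r.
  by rewrite -scalemxAl (sub_kermxP (row_sub _ _)) scaler0.
have AK : (A <= kermx g^T)%MS by apply/sub_kermxP.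
have := (mxrank_leqif_eq AK).2.
rewrite rkA mxrank_ker mxrank_tr rank_rV (monic_row_neq0 Mg) subn1 eqxx.
by move/esym/andP=> [].
Qed.

Lemma adds_indep n m1 m2 (W S : 'M[F]_n) (Bz : 'M[F]_(m1, n)) (Bc : 'M[F]_(m2, n)) :
  row_free Bz -> row_free Bc -> (W + Bz <= S)%MS -> (S :&: Bc)%MS = 0 ->
  (W :&: Bz)%MS = 0 -> forall (w : 'rV_n) a b,
  (w <= W)%MS -> w + a *m Bz + b *m Bc = 0 -> a = 0 /\ b = 0.
Proof.
move=> Bz_free Bc_free WBzS SBc0 WBz0 w a b wW.
rewrite -[_ + b *m Bc]opprK => /eqP; rewrite oppr_eq0 opprD subr_eq0 => /eqP bBc.
have bBc0 : b *m Bc = 0.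
  apply: (capmx_eq0_sub SBc0) (submxMl _ _); rewrite -bBc eqmx_opp.
  by apply: submx_trans WBzS; rewrite addmx_sub_adds // submxMl.
have -> : b = 0 by apply: (row_free_inj Bc_free); rewrite bBc0 mul0mx.
split=> //; apply: (row_free_inj Bz_free); rewrite mul0mx.
apply: (capmx_eq0_sub WBz0) (submxMl _ _).
by move/eqP: bBc; rewrite bBc0 oppr_eq0 addrC addr_eq0 => /eqP ->; rewrite eqmx_opp.
Qed.

Lemma exists_sub_rank m n k (A : 'M[F]_(m, n)) : (k <= \rank A)%N ->
  exists2 W : 'M[F]_n, (W <= A)%MS & \rank W = k.
Proof.
move=> kA; exists <<(pid_mx k : 'M_(\rank A)) *m row_base A>>%MS.
  by rewrite genmxE (submx_trans (submxMl _ _)) ?eq_row_base.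
by rewrite mxrank_gen mxrankMfree ?row_base_free // rank_pid_mx.
Qed.

Lemma diff_indep n m (Z W : 'M[F]_n) (Y : 'M[F]_(m, n)) :
  (W <= Z)%MS -> (Z :&: Y)%MS = 0 -> forall (w : 'rV_n) a b, (w <= W)%MS ->
  w + a *m row_base (Z :\: W)%MS + b *m row_base Y = 0 -> a = 0 /\ b = 0.
Proof.
move=> WZ ZY0; apply: (adds_indep (S := Z)) (row_base_free _) (row_base_free _) _ _ _.
- by rewrite addsmx_sub WZ eq_row_base diffmxSl.
- by apply: capmx_eq0S ZY0 _ _; rewrite ?eq_row_base submx_refl.
- by rewrite capmxC; apply: capmx_eq0S (capmx_diff Z W) _ _; rewrite ?eq_row_base submx_refl.
Qed.

End RowSpaces.

Section Family.
Variables (F : fieldType) (n m1 m2 : nat).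
Variables (W : 'M[F]_n) (Bz : 'M[F]_(m1, n)) (Bc : 'M[F]_(m2, n)).
Hypothesis indep : forall (w : 'rV_n) a b, (w <= W)%MS ->
  w + a *m Bz + b *m Bc = 0 -> a = 0 /\ b = 0.

Definition comb (w : 'rV_n) a b := w + a *m Bz + b *m Bc.

Lemma comb_inj w w' a a' b b' : (w <= W)%MS -> (w' <= W)%MS ->
  comb w a b = comb w' a' b' -> [/\ w = w', a = a' & b = b'].
Proof.
move=> wW w'W E.
have : comb w a b - comb w' a' b' = (w - w') + (a - a') *m Bz + (b - b') *m Bc.
  by rewrite /comb !mulmxBl opprD addrACA opprD [w + _ + (- w' - _)]addrACA.
rewrite E subrr => /esym.
case/indep; first by rewrite addmx_sub // eqmx_opp.
move/eqP; rewrite subr_eq0 => /eqP aa' /eqP; rewrite subr_eq0 => /eqP bb'.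
by move: E; rewrite /comb aa' bb' => /addIr/addIr ->.
Qed.

(* When [W + Bz] spans [Z], [fam_mx g p h t] is the hyperplane
   [W + kermx g^T *m Bz] of [Z] plus the vector [fam_vec p h t] outside [Z].
   The [Bz]-part of that vector only matters modulo [kermx g^T], so a single
   coordinate [t] along the pivot [p] of [g] describes it. *)
Definition fam_vec (p : 'I_m1) (h : 'rV_m2) (t : F) : 'rV_n :=
  h *m Bc + (t *: delta_mx 0 p) *m Bz.

Definition fam_mx (g : 'rV_m1) p h t := (W + kermx g^T *m Bz + fam_vec p h t)%MS.

Lemma fam_vecE p h t : fam_vec p h t = comb 0 (t *: delta_mx 0 p) h.
Proof. by rewrite /comb add0r addrC. Qed.

Lemma sub_fam_mxP g p h t x : (x <= fam_mx g p h t)%MS -> exists w k l,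
  [/\ (w <= W)%MS, k *m g^T = 0 & x = comb w (k + l *: (t *: delta_mx 0 p)) (l *: h)].
Proof.
case/sub_addsmxP => [[u1 u2]] /= ->.
have : (u1 *m (W + kermx g^T *m Bz)%MS <= W + kermx g^T *m Bz)%MS by apply: submxMl.
case/sub_addsmxP => [[v1 v2]] /= ->.
exists (v1 *m W), (v2 *m kermx g^T), (u2 0 0); split; first exact: submxMl.
  by rewrite -mulmxA mulmx_ker mulmx0.
rewrite {1}[u2]mx11_scalar mul_scalar_mx /comb /fam_vec mulmxA mulmxDl.
by rewrite -!scalemxAl scalerDr !addrA addrAC.
Qed.

Lemma fam_vec_notin (Z : 'M[F]_n) p h t : (Z <= W + Bz)%MS -> h != 0 ->
  ~~ (fam_vec p h t <= Z)%MS.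
Proof.
move=> ZWBz h0; apply/negP => /submx_trans/(_ ZWBz).
case/sub_addsmxP => [[u1 u2]] /=; rewrite fam_vecE => E.
have E' : comb 0 (t *: delta_mx 0 p) h = comb (u1 *m W) u2 0.
  by rewrite E /comb mul0mx addr0.
by case: (comb_inj (sub0mx _ _) (submxMl _ _) E') => _ _ /eqP; rewrite (negbTE h0).
Qed.

Lemma sub_fam_mx_ker g p h t (a : 'rV_m1) : h != 0 ->
  (a *m Bz <= fam_mx g p h t)%MS = (a *m g^T == 0).
Proof.
move=> h0; apply/idP/idP => [|ag0]; last first.
  apply: submx_trans (addsmxSl _ _); apply: submx_trans (addsmxSr _ _).
  by apply: submxMr; rewrite sub_kermx.
case/sub_fam_mxP => w [k [l [wW kg0 E]]].
have E' : comb 0 a 0 = comb w (k + l *: (t *: delta_mx 0 p)) (l *: h).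
  by rewrite -E /comb add0r mul0mx addr0.
case: (comb_inj (sub0mx _ _) wW E') => _ -> /esym/eqP.
by rewrite scaler_eq0 (negbTE h0) orbF => /eqP ->; rewrite scale0r addr0 kg0.
Qed.

Lemma fam_mx_sub_adds (Z : 'M[F]_n) g p h t : (W <= Z)%MS -> (Bz <= Z)%MS ->
  (fam_mx g p h t <= Z + fam_vec p h t)%MS.
Proof.
move=> WZ BzZ; apply: addsmxS (submx_refl _).
by rewrite addsmx_sub WZ /=; apply: submx_trans BzZ; apply: submxMl.
Qed.

Lemma fam_vec_sub (V : 'M[F]_n) g p h c u1 : monic_row p g -> c != 0 ->
  (kermx g^T *m Bz <= V)%MS -> ((u1 *m Bz + (c *: h) *m Bc)%R <= V)%MS ->
  (fam_vec p h (dot (c^-1 *: u1) g) <= V)%MS.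
Proof.
move=> Mg c0 kerV xV; set t := dot _ g.
pose a := c^-1 *: u1 - t *: delta_mx 0 p.
have aK : (a <= kermx g^T)%MS.
  by rewrite sub_kermx mul_tr_eq0 dotDl dotNl dotZl dot_delta (monic_row_pivot Mg) mulr1 subrr.
have -> : fam_vec p h t = c^-1 *: (u1 *m Bz + (c *: h) *m Bc) - a *m Bz.
  rewrite /fam_vec /a mulmxBl opprB scalerDr -!scalemxAl scalerA mulVf // scale1r.
  by rewrite [c^-1 *: _ + _]addrC addrACA subrr addr0.
rewrite addmx_sub ?scalemx_sub // eqmx_opp.
exact: submx_trans (submxMr Bz aK) kerV.
Qed.

Definition fam_space (x : ('I_m1 * 'rV_m1) * (('I_m2 * 'rV_m2) * F)) : 'M_n :=
  <<fam_mx x.1.2 x.1.1 x.2.1.2 x.2.2>>%MS.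

Lemma fam_space_inj p g p1 h t p' g' p1' h' t' :
  monic_row p g -> monic_row p1 h -> monic_row p' g' -> monic_row p1' h' ->
  fam_space ((p, g), ((p1, h), t)) = fam_space ((p', g'), ((p1', h'), t')) ->
  ((p, g), ((p1, h), t)) = ((p', g'), ((p1', h'), t')).
Proof.
rewrite /fam_space /= => Mg Mh Mg' Mh' /genmxP/andP[sub12 sub21].
have h0 := monic_row_neq0 Mh; have h'0 := monic_row_neq0 Mh'.
have [pp' gg'] : p = p' /\ g = g'.
  apply: monic_row_ker_inj Mg Mg' _ => a.
  rewrite -(sub_fam_mx_ker g p t a h0) -(sub_fam_mx_ker g' p' t' a h'0).
  by apply/idP/idP => /submx_trans; [apply | apply].
subst p' g'.
have : (fam_vec p h t <= fam_mx g p h' t')%MS.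
  by apply: submx_trans sub12; apply: addsmxSr.
case/sub_fam_mxP => w [k [l [wW kg0]]]; rewrite fam_vecE => E.
case: (comb_inj (sub0mx _ _) wW E) => _ Et Eh.
case: (monic_row_collinear Mh Mh' Eh) => pp1 hh'; subst p1' h'.
have l1 : l = 1.
  have : (1 - l) *: h = 0 by rewrite scalerBl scale1r -Eh subrr.
  by move/eqP; rewrite scaler_eq0 (negbTE h0) orbF subr_eq0 => /eqP.
have : dot (t *: delta_mx 0 p) g = dot (k + t' *: delta_mx 0 p) g by rewrite Et l1 scale1r.
rewrite dotDl !dotZl dot_delta (monic_row_pivot Mg) !mulr1.
by move/eqP: kg0; rewrite mul_tr_eq0 => /eqP ->; rewrite add0r => ->.
Qed.

Hypothesis Bz_free : row_free Bz.

Lemma mxrank_fam_mx g p h t : g != 0 -> h != 0 ->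
  \rank (fam_mx g p h t) = (\rank W + m1)%N.
Proof.
move=> g0 h0.
have rk_ker : \rank (kermx g^T *m Bz) = m1.-1.
  by rewrite mxrankMfree // mxrank_ker mxrank_tr rank_rV g0 subn1.
have rk_hyp : \rank (W + kermx g^T *m Bz)%MS = (\rank W + m1.-1)%N.
  rewrite -rk_ker; apply: mxrank_disjoint_sum; apply/eqP; rewrite -submx0.
  apply/row_subP => i; rewrite submx0; apply/eqP.
  have := row_sub i (W :&: kermx g^T *m Bz)%MS.
  rewrite sub_capmx => /andP[xW /submxP[D xD]].
  have E : comb (row i (W :&: kermx g^T *m Bz)%MS) 0 0 = comb 0 (D *m kermx g^T) 0.
    by rewrite /comb !mul0mx !addr0 add0r xD mulmxA.
  by case: (comb_inj xW (sub0mx _ _) E).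
have m1_gt0 : (0 < m1)%N by apply: leq_ltn_trans (ltn_ord p).
rewrite /fam_mx mxrank_adds_row ?rk_hyp -?addnS ?prednK //.
by apply: fam_vec_notin h0; rewrite addsmxS // submxMl.
Qed.

End Family.

Section Neighbours.
Variables (F : finFieldType) (n : nat).
Implicit Types (r : nat) (Z V : 'M[F]_n).

Lemma dI_le1 Z V (y : 'rV_n) : \rank V = \rank Z -> (V <= Z + y)%MS -> (dI Z V <= 1)%N.
Proof.
move=> rVZ VZy; rewrite /dI rVZ minnn leq_subLR.
apply: leq_trans (mxrankS (_ : (Z + V <= Z + y)%MS)) _; first by rewrite addsmx_sub addsmxSl.
by apply: leq_trans (mxrank_adds_leqif _ _).1 _; rewrite leq_add2l rank_leq_row.
Qed.

Lemma rank_Er r Z : Z \in Er F n r -> \rank Z = r.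
Proof. by rewrite inE => /andP[_ /eqP]. Qed.

Lemma dI_add_rank_cap r Z V : Z \in Er F n r -> V \in Er F n r ->
  (dI Z V + \rank (Z :&: V))%N = r.
Proof.
move=> /rank_Er rkZ /rank_Er rkV; have := mxrank_sum_cap Z V.
have : (\rank Z <= \rank (Z + V))%N by apply/mxrankS/addsmxSl.
by rewrite /dI rkZ rkV minnn; lia.
Qed.

Lemma genmx_in_Er r m (A : 'M[F]_(m, n)) : \rank A = r -> <<A>>%MS \in Er F n r.
Proof. by rewrite inE genmx_id mxrank_gen => ->; rewrite !eqxx. Qed.

Lemma ball_center r t Z : Z \in Er F n r -> Z \in ball r t Z.
Proof. by move=> ZE; rewrite inE ZE /dI (addsmx_idPl (submx_refl Z)) minnn subnn. Qed.

Definition fam_params m1 m2 (T : {set F}) :=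
  setX (monic_rows F m1) (setX (monic_rows F m2) T).

Section FamilyInBall.
Variables (r m1 m2 : nat) (Z W : 'M[F]_n) (Bz : 'M[F]_(m1, n)) (Bc : 'M[F]_(m2, n)).
Hypothesis indep : forall (w : 'rV_n) a b, (w <= W)%MS ->
  w + a *m Bz + b *m Bc = 0 -> a = 0 /\ b = 0.

Lemma card_fam_image T :
  #|fam_space W Bz Bc @: fam_params m1 m2 T| =
    (#|monic_rows F m1| * (#|monic_rows F m2| * #|T|))%N.
Proof.
rewrite /fam_params card_in_imset ?cardsX // => [[[p g] [[p1 h] t]]] [[p' g'] [[p1' h'] t']].
rewrite !inE /= => /and3P[Mg Mh _] /and3P[Mg' Mh' _].
exact: fam_space_inj.
Qed.

Hypotheses (Bz_free : row_free Bz) (ZE : Z \in Er F n r).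
Hypotheses (WZ : (W <= Z)%MS) (BzZ : (Bz <= Z)%MS) (rkWBz : (\rank W + m1)%N = r).

Lemma fam_space_in_ball T x : x \in fam_params m1 m2 T ->
  fam_space W Bz Bc x \in ball r 1 Z.
Proof.
case: x => [[p g] [[p1 h] t]]; rewrite /fam_params => /setXP[Mg /setXP[Mh _]].
rewrite inE in Mg; rewrite inE in Mh.
have rkV : \rank (fam_mx W Bz Bc g p h t) = r.
  by rewrite (mxrank_fam_mx indep Bz_free _ _ (monic_row_neq0 Mg) (monic_row_neq0 Mh)).
have VE := genmx_in_Er rkV.
rewrite /fam_space inE VE.
apply: (dI_le1 (y := fam_vec Bz Bc p h t)); first by rewrite mxrank_gen rkV (rank_Er ZE).
by rewrite genmxE fam_mx_sub_adds.
Qed.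

End FamilyInBall.

Lemma ball1_neighbour r Z V : Z \in Er F n r -> V \in Er F n r ->
  (dI Z V <= 1)%N -> V != Z -> ~~ (V <= Z)%MS /\ \rank (V :&: Z)%MS = r.-1.
Proof.
move=> ZE VE dZV VZ; have rkZ := rank_Er ZE; have rkV := rank_Er VE.
have nVZ : ~~ (V <= Z)%MS.
  apply: contra VZ => VsubZ; move: ZE VE; rewrite !inE => /andP[/eqP <- _] /andP[/eqP <- _].
  by apply/eqP/genmxP; rewrite -(mxrank_leqif_eq VsubZ).2 rkV rkZ.
have rk_lt : (\rank (V :&: Z) < r)%N.
  rewrite ltn_neqAle -{2}rkV mxrankS ?capmxSl // andbT; apply: contra nVZ => /eqP rk_eq.
  have := (mxrank_leqif_eq (capmxSl V Z)).2; rewrite rk_eq rkV eqxx.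
  by move=> /esym/andP[_ /submx_trans]; apply; apply: capmxSr.
by split=> //; have := dI_add_rank_cap ZE VE; rewrite capmxC; lia.
Qed.

Lemma complement_indep (Z : 'M[F]_n) : forall (w : 'rV_n) a b, (w <= (0 : 'M_n))%MS ->
  w + a *m row_base Z + b *m row_base (Z^C)%MS = 0 -> a = 0 /\ b = 0.
Proof.
apply: (adds_indep (S := Z)) (row_base_free _) (row_base_free _) _ _ _.
- by rewrite addsmx_sub sub0mx eq_row_base submx_refl.
- by apply: capmx_eq0S (capmx_compl Z) _ _; rewrite ?eq_row_base submx_refl.
- exact: cap0mx.
Qed.

Lemma ball1_neighbour_fam r Z V : Z \in Er F n r -> V \in Er F n r ->
    ~~ (V <= Z)%MS -> \rank (V :&: Z)%MS = r.-1 ->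
  exists2 x, x \in fam_params (\rank Z) (\rank (Z^C)%MS) setT &
    V = fam_space 0 (row_base Z) (row_base (Z^C)%MS) x.
Proof.
move=> ZE VE nVZ rkVZ; have rkZ := rank_Er ZE; have rkV := rank_Er VE.
set Bz := row_base Z; set Bc := row_base (Z^C)%MS.
have rZ_gt0 : (0 < \rank Z)%N.
  rewrite rkZ lt0n; apply: contra nVZ => /eqP r0.
  by move/eqP: rkV; rewrite r0 mxrank_eq0 => /eqP ->; apply: sub0mx.
have VZ_Bz : ((V :&: Z)%MS <= Bz)%MS by rewrite eq_row_base capmxSr.
have rk_coord : \rank ((V :&: Z)%MS *m pinvmx Bz) = (\rank Z).-1.
  by rewrite -(mxrankMfree _ (row_base_free Z)) mulmxKpV // rkVZ rkZ.
case: (hyperplane_monic_kermx rZ_gt0 rk_coord) => p [g [Mg kerg]].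
have kerV : (kermx g^T *m Bz <= V)%MS.
  by apply: submx_trans (submxMr Bz kerg) _; rewrite mulmxKpV // capmxSl.
case/row_subPn: nVZ => j xZ.
have /sub_addsmxP[[u1 u2] /= xE] : (row j V <= Bz + Bc)%MS.
  apply: submx_trans (submx_full _ (addsmx_compl_full Z)) _.
  by apply: addsmxS; rewrite eq_row_base.
have u2_0 : u2 != 0.
  apply: contra xZ => /eqP u2_0; rewrite xE u2_0 mul0mx addr0.
  by apply: submx_trans (submxMl _ _) _; rewrite eq_row_base.
case: (monic_row_exists u2_0) => p1 [c [h [Mh c0 u2E]]].
pose t := dot (c^-1 *: u1) g; exists (p, g, (p1, h, t)); first by rewrite !inE Mg Mh.
have vecV : (fam_vec Bz Bc p h t <= V)%MS.
  by apply: fam_vec_sub Mg c0 kerV _; rewrite -u2E -xE row_sub.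
have famV : (fam_mx 0 Bz Bc g p h t <= V)%MS by rewrite !addsmx_sub sub0mx kerV vecV.
have gV : <<V>>%MS = V by move: VE; rewrite inE => /andP[/eqP].
rewrite -gV /fam_space /=; apply/esym/genmxP.
rewrite -(mxrank_leqif_eq famV).2 mxrank_fam_mx ?(monic_row_neq0 Mg) ?(monic_row_neq0 Mh) //.
- by rewrite mxrank0 rkV rkZ.
- exact: complement_indep.
- exact: row_base_free.
Qed.

Lemma card_ball1_le r Z : Z \in Er F n r ->
  (#|ball r 1 Z| <= 1 + #|monic_rows F r| * (#|monic_rows F (n - r)| * #|F|))%N.
Proof.
move=> ZE; set fam := fam_space 0 (row_base Z) (row_base (Z^C)%MS).
have : ball r 1 Z \subset Z |: fam @: fam_params _ _ setT.
  apply/subsetP => V; rewrite inE => /andP[VE dZV].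
  have [->|VZ] := eqVneq V Z; first by rewrite setU11.
  case: (ball1_neighbour ZE VE dZV VZ) => nVZ rkVZ.
  case: (ball1_neighbour_fam ZE VE nVZ rkVZ) => x xP ->.
  by rewrite setU1r // imset_f.
move/subset_leq_card/leq_trans; apply; rewrite cardsU1 leq_add ?leq_b1 //.
rewrite card_fam_image ?cardsT //; last exact: complement_indep.
by rewrite mxrank_compl (rank_Er ZE).
Qed.

End Neighbours.

Section Codes.
Variables (F : finFieldType) (n : nat).
Implicit Types (r rho : nat) (C : {set 'M[F]_n}) (Z V : 'M[F]_n).

Lemma dIC_le C U X : X \in C -> (dIC U C <= dI U X)%N.
Proof. by move=> XC; have := bigmin_le_cond n (dI U) XC; rewrite minEnat. Qed.

Lemma exists_close_codeword C U t : (dIC U C <= t)%N -> (t < n)%N ->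
  exists2 X, X \in C & (dI U X <= t)%N.
Proof.
move=> dUt tn; apply/exists_inP; apply: contraLR dUt; rewrite negb_exists_in -ltnNge.
move/forall_inP => far; have := @lt_bigmin _ nat _ (index_enum _) (dI U) n t (mem C) tn.
by rewrite minEnat; apply=> X /far; rewrite -ltnNge.
Qed.

Lemma notin_Aset_cap r rho C (C1 : 'M[F]_n) V k (S : 'M[F]_(k, n)) :
  C1 \in C -> C1 \in Er F n r -> V \in Er F n r -> (S <= V)%MS -> (S <= C1)%MS ->
  (r - rho < \rank S)%N -> V \notin Aset r rho C.
Proof.
move=> C1C C1E VE SV SC1 rkS; rewrite inE VE /= neq_ltn; apply/orP; left.
apply: leq_ltn_trans (dIC_le V C1C) _.
have : (\rank S <= \rank (V :&: C1))%N by apply: mxrankS; rewrite sub_capmx SV.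
have := dI_add_rank_cap VE C1E; lia.
Qed.

Lemma card_ball1_diff_Aset_dI_eq r rho C Z (C1 : 'M[F]_n) :
  Z \in Er F n r -> C1 \in C -> C1 \in Er F n r -> dI Z C1 = rho ->
  (#|monic_rows F rho| ^ 2 <= #|ball r 1 Z :\: Aset r rho C|)%N.
Proof.
move=> ZE C1C C1E dZC1; have rkZ := rank_Er ZE; have rkC1 := rank_Er C1E.
set W := (Z :&: C1)%MS; set X := (Z :\: W)%MS; set Y := (C1 :\: Z)%MS.
have WZ : (W <= Z)%MS := capmxSl _ _.
have rkW : (rho + \rank W)%N = r by rewrite -dZC1 (dI_add_rank_cap ZE C1E).
have rkX : \rank X = rho.
  by have := mxrank_cap_compl Z W; rewrite (capmx_idPr WZ) -/X rkZ; lia.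
have rkY : \rank Y = rho.
  by have := mxrank_cap_compl C1 Z; rewrite capmxC -/W -/Y rkC1; lia.
have ZY0 : (Z :&: Y)%MS = 0 by rewrite capmxC capmx_diff.
have indep := diff_indep WZ ZY0.
set fam := fam_space W (row_base X) (row_base Y).
have BzZ : (row_base X <= Z)%MS by rewrite eq_row_base diffmxSl.
have rkWX : (\rank W + \rank X)%N = r by rewrite rkX addnC.
have : fam @: fam_params _ _ [set 0] \subset ball r 1 Z :\: Aset r rho C.
  apply/subsetP => _ /imsetP[[[p g] [[p1 h] t]] x_par ->].
  have Vball := fam_space_in_ball indep (row_base_free X) ZE WZ BzZ rkWX x_par.
  move: x_par => /setXP[_ /setXP[Mh /set1P t0]]; rewrite inE in Mh; subst t.
  have VE : fam (p, g, (p1, h, 0)) \in Er F n r by move: Vball; rewrite inE => /andP[].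
  rewrite in_setD Vball andbT.
  apply: (notin_Aset_cap (S := (W + fam_vec (row_base X) (row_base Y) p h 0)%MS) C1C C1E VE).
  - by rewrite /fam /fam_space genmxE /fam_mx addsmxS ?addsmxSl.
  - rewrite addsmx_sub capmxSr /fam_vec scale0r mul0mx addr0 /=.
    by apply: submx_trans (submxMl _ _) _; rewrite eq_row_base diffmxSl.
  - rewrite mxrank_adds_row; first lia.
    by apply: (fam_vec_notin indep) (monic_row_neq0 Mh); rewrite addsmxSl.
move/subset_leq_card; apply: leq_trans.
by rewrite card_fam_image // cards1 muln1 rkX rkY.
Qed.

Lemma card_ball1_diff_Aset_dI_lt r rho C Z (C1 : 'M[F]_n) :
  Z \in Er F n r -> C1 \in C -> C1 \in Er F n r -> (dI Z C1 < rho)%N -> (rho <= r)%N ->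
  (1 + #|monic_rows F rho.-1| * (#|monic_rows F (n - r)| * #|F|)
     <= #|ball r 1 Z :\: Aset r rho C|)%N.
Proof.
move=> ZE C1C C1E dZC1 rho_le; have rkZ := rank_Er ZE.
set S0 := (Z :&: C1)%MS.
have rkS0 : (r - rho < \rank S0)%N by have := dI_add_rank_cap ZE C1E; rewrite -/S0; lia.
have [W WS0 rkW] := exists_sub_rank rkS0.
have WZ : (W <= Z)%MS := submx_trans WS0 (capmxSl _ _).
have WC1 : (W <= C1)%MS := submx_trans WS0 (capmxSr _ _).
set X := (Z :\: W)%MS; set Y := (Z^C)%MS.
have rkX : \rank X = rho.-1.
  by have := mxrank_cap_compl Z W; rewrite (capmx_idPr WZ) -/X rkW rkZ; lia.
have indep := diff_indep WZ (capmx_compl Z).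
set fam := fam_space W (row_base X) (row_base Y).
have BzZ : (row_base X <= Z)%MS by rewrite eq_row_base diffmxSl.
have rkWX : (\rank W + \rank X)%N = r by rewrite rkW rkX; lia.
have ZWX : (Z <= W + row_base X)%MS.
  rewrite -{1}(addsmx_diff_cap_eq Z W) addsmxC.
  by apply: addsmxS; rewrite ?capmxSr ?eq_row_base.
have notin_A V : V \in Er F n r -> (W <= V)%MS -> V \notin Aset r rho C.
  by move=> VE WV; apply: (notin_Aset_cap C1C C1E VE WV WC1); rewrite rkW.
have : Z |: fam @: fam_params _ _ setT \subset ball r 1 Z :\: Aset r rho C.
  apply/subsetP => V; case/setU1P => [->|/imsetP[x x_par ->]]; rewrite in_setD.
    by rewrite notin_A ?ball_center.
  have Vball := fam_space_in_ball indep (row_base_free X) ZE WZ BzZ rkWX x_par.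
  rewrite Vball andbT notin_A //; first by move: Vball; rewrite inE => /andP[].
  by rewrite /fam /fam_space genmxE /fam_mx -addsmxA addsmxSl.
move/subset_leq_card; apply: leq_trans; rewrite cardsU1 card_fam_image // cardsT.
have -> : Z \notin fam @: fam_params _ _ setT.
  apply/imsetP => [[[[p g] [[p1 h] t]] /setXP[_ /setXP[Mh _]] ZE']].
  rewrite inE in Mh; move: (fam_vec_notin indep p t ZWX (monic_row_neq0 Mh)).
  by rewrite [X in (_ <= X)%MS]ZE' /fam /fam_space genmxE addsmxSr.
by rewrite rkX mxrank_compl rkZ.
Qed.

End Codes.

Definition qint (R : pzSemiRingType) (x : R) m := \sum_(i < m) x ^+ i.

Lemma qintS (R : pzSemiRingType) (x : R) m : qint x m.+1 = 1 + x * qint x m.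
Proof.
rewrite /qint big_ord_recl expr0 mulr_sumr.
by congr (_ + _); apply: eq_bigr => i _; rewrite exprS.
Qed.

Section QintInequalities.
Variable R : realDomainType.
Implicit Type x : R.

Lemma qint_ge0 x m : 0 <= x -> 0 <= qint x m.
Proof. by move=> x0; apply: sumr_ge0 => i _; apply: exprn_ge0. Qed.

Lemma qint_le x a b : 0 <= x -> (a <= b)%N -> qint x a <= qint x b.
Proof.
move=> x0 /subnK <-; elim: (b - a)%N => [|k IHk]; first by rewrite add0n.
by apply: le_trans IHk _; rewrite addSn /qint big_ord_recr lerDl exprn_ge0.
Qed.

Lemma qint_sq_le x k M : 2 <= x -> (k.+2 <= M)%N ->
  qint x k.+1 ^+ 2 <= 1 + qint x k * qint x M * x.
Proof.
move=> x2 kM; have x0 : 0 <= x by apply: le_trans x2; lra.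
have g0 := qint_ge0 k x0; have := qint_le x0 kM; rewrite !qintS.
set g := qint x k; set gM := qint x M => gM_ge.
have h1 : 0 <= x * g by apply: mulr_ge0.
have h2 : 0 <= x * g * (gM - (1 + x * (1 + x * g))) by apply: mulr_ge0; lra.
have h3 : 0 <= x * g * ((x - 1) + x * g * (x - 1)) by apply: mulr_ge0 => //; nra.
nra.
Qed.

End QintInequalities.

Lemma gaussb1 q m : q != 1%N -> gaussb q m 1 = qint (q%:R : rat) m.
Proof.
move=> q1; have q1' : (q%:R - 1 : rat) != 0 by rewrite subr_eq0 pnatr_eq1.
rewrite /gaussb big_ord1 expr0 expr1.
by apply: (mulIf q1'); rewrite divfK // /qint subrX1 mulrC.
Qed.

Lemma VC1 q n r : VC q n r 1 = 1 + q%:R * gaussb q r 1 * gaussb q (n - r) 1.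
Proof.
by rewrite /VC big_ord_recr big_ord1 /NC /gaussb !big_ord0 mul0n mul1n expr0 expr1 !mulr1.
Qed.

Lemma card_monic_rows_qint (F : finFieldType) m :
  #|monic_rows F m|%:R = qint (#|F|%:R : rat) m.
Proof.
have q_gt1 : (1 < #|F|)%N := card_finNzRing_gt1 F.
have q1 : (#|F|%:R - 1 : rat) != 0 by rewrite subr_eq0 pnatr_eq1 gtn_eqF.
have qpred : (#|F|.-1%:R : rat) = #|F|%:R - 1 by rewrite -subn1 natrB // ltnW.
apply: (mulIf q1); rewrite -qpred -natrM card_monic_rows natrB ?expn_gt0 ?(ltnW q_gt1) //.
by rewrite natrX subrX1 mulrC qpred.
Qed.

Section Bound.
Variables (F : finFieldType) (n : nat).
Local Notation q := #|F|.

Lemma gaussb1_card m : gaussb q m 1 = #|monic_rows F m|%:R.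
Proof. by rewrite card_monic_rows_qint gaussb1 // gtn_eqF // card_finNzRing_gt1. Qed.

Lemma card_ball1_le_VC1 r (Z : 'M[F]_n) : Z \in Er F n r ->
  (#|ball r 1 Z|%:R : rat) <= VC q n r 1.
Proof.
move/card_ball1_le; rewrite -(ler_nat rat) => /le_trans; apply.
by rewrite VC1 !gaussb1_card natrD !natrM; lra.
Qed.

Lemma cj_le_card_ball1_diff_Aset r rho (C : {set 'M[F]_n}) (Z C1 : 'M[F]_n) :
  Z \in Er F n r -> C1 \in C -> C1 \in Er F n r -> (dI Z C1 <= rho)%N ->
  (0 < rho)%N -> (rho <= r)%N -> (rho < n - r)%N ->
  cj q rho <= #|ball r 1 Z :\: Aset r rho C|%:R.
Proof.
move=> ZE C1C C1E dZC1 rho_gt0 rho_le rho_lt; rewrite /cj gaussb1_card.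
case: ltngtP dZC1 => // [dZC1_lt|dZC1_eq] _; last first.
  by rewrite -natrX ler_nat (card_ball1_diff_Aset_dI_eq ZE C1C C1E dZC1_eq).
have := card_ball1_diff_Aset_dI_lt ZE C1C C1E dZC1_lt rho_le.
rewrite -(ler_nat rat) => /(le_trans _); apply.
rewrite natrD !natrM !card_monic_rows_qint -(prednK rho_gt0) mulrA.
by apply: qint_sq_le; rewrite ?prednK // (ler_nat _ 2) card_finNzRing_gt1.
Qed.

Lemma card_Aset_ball1_le r rho (C : {set 'M[F]_n}) (Z : 'M[F]_n) :
  (0 < rho)%N -> (rho <= r)%N -> (rho < n - r)%N -> C \subset Er F n r ->
  (dIC Z C <= rho)%N -> Z \in Er F n r ->
  (#|Aset r rho C :&: ball r 1 Z|%:R : rat) <= VC q n r 1 - cj q rho.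
Proof.
move=> rho_gt0 rho_le rho_lt CE dZC ZE.
have [C1 C1C dZC1] := exists_close_codeword dZC (leq_trans rho_lt (leq_subr _ _)).
have lower := cj_le_card_ball1_diff_Aset ZE C1C (subsetP CE _ C1C) dZC1 rho_gt0 rho_le rho_lt.
have upper := card_ball1_le_VC1 ZE.
rewrite -(cardsID (Aset r rho C) (ball r 1 Z)) natrD setIC in upper.
lra.
Qed.

End Bound.

Theorem lemma12 (F : finFieldType) (n r rho : nat) (C : {set 'M[F]_n})
  (Z : 'M[F]_n) :
  (r <= n./2)%N -> (0 < rho)%N -> (rho < r)%N ->
  C \subset Er F n r ->
  covering_radius r C = rho ->
  Z \in Zset r rho C ->
  ((#|Aset r rho C :&: ball r 1 Z|%:R : rat)
     <= VC #|F| n r 1 - cj #|F| rho)%R.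
Proof.
move=> r_le rho_gt0 rho_lt CE cov; rewrite inE => /andP[ZE _].
apply: card_Aset_ball1_le => //; first exact: ltnW.
  by move: r_le; rewrite -{2}(odd_double_half n); lia.
by rewrite -cov; apply: (leq_bigmax_cond (P := mem (Er F n r))).
Qed.
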